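(* Let $n,k,s$ be positive integers with $2\le s\le\lfloor n/k\rfloor$, let $d=\lfloor n/s\rfloor$, and let $\alpha,\beta>0$. Let $F^*(\alpha,d\beta)$ denote the minimum, over all finite sequences of failures and repairs and all data collectors, of the min-cut separating the data collector from the source in the information flow graph of the FCRS with storage $\alpha$ and per-helper download $\beta$. Then $$F^*(\alpha,d\beta)=\begin{cases}kd\beta-\lfloor k/2\rfloor\lceil k/2\rceil\beta & \text{if } d\le\alpha/\beta,\\ k_1\alpha+(d-k_1)(k-k_1)\beta & \text{if } d+k-2k_1-1\le\alpha/\beta<\min\{d+k-2k_1+1,\ d\} \text{ for } k_1\in[\lceil k/2\rceil:k],\\ k\alpha & \text{if } \alpha/\beta<d-k-1.\end{cases}$$
   Context: Notation: $[a:b]=\{a,\dots,b\}$. FCRS: $n=ds+s_0$ servers ($s_0=n\bmod s$) in clusters $1,\dots,s$ of size $d$ and cluster $s+1$ of size $s_0$; server $j$ of cluster $i$ is $(i,j)$. Information flow graph: a source node; for every server and time $t\ge0$ an in-node and out-node joined by an edge of capacity $\alpha$; at $t=0$ the source connects to every in-node with infinite capacity. At the end of each time slot $t-1$ exactly one server $(r,\ell)$ fails; a repair cluster $i\in[s]$ with $i\ne r$ is chosen arbitrarily (cluster $s+1$ never serves as repair group), and there are edges of capacity $\beta$ from the time-$(t-1)$ out-nodes of all $d$ servers of cluster $i$ to the time-$t$ in-node of $(r,\ell)$; every other server has an infinite-capacity edge from its time-$(t-1)$ out-node to its time-$t$ in-node. A data collector at time $t$ is a node receiving infinite-capacity edges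 from the time-$t$ out-nodes of some $k$ distinct servers. *)

From HB Require Import structures.
From mathcomp Require Import all_boot all_order all_algebra.
Set Implicit Arguments. Unset Strict Implicit. Unset Printing Implicit Defensive.
Import Order.TTheory GRing.Theory Num.Theory.

(* ---------- Cluster layout of the FCRS (0-based indices) ----------
   Servers are numbered 0 .. n-1.  With d = n %/ s, server m < d*s lies in
   cluster m %/ d (clusters 0 .. s-1, each of size d, server (i,j) of the paper
   is m = (i-1)*d + (j-1)); servers d*s .. n-1 form the extra cluster s
   (the paper's cluster s+1, of size s0 = n %% s). *)
Definition clust_d (n s : nat) : nat := n %/ s.
Definition cluster_of (n s m : nat) : nat :=
  if m < s * clust_d n s then m %/ clust_d n s else s.
Definition cluster_members (n s i : nat) : seq nat :=
  iota (i * clust_d n s) (clust_d n s).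

(* A failure/repair event (r, i): server r fails, cluster i repairs it.
   Cluster i must be one of the s full clusters and differ from r's cluster. *)
Definition valid_event (n s : nat) (e : nat * nat) : bool :=
  [&& e.1 < n, e.2 < s & e.2 != cluster_of n s e.1].
(* A finite sequence of failures; event number t (0-based) happens at the end
   of time slot t, producing the nodes of time t+1. *)
Definition valid_scenario (n s : nat) (sc : seq (nat * nat)) : bool :=
  all (valid_event n s) sc.
(* A data collector (t, K) at time t <= T connected to k distinct servers K. *)
Definition valid_dc (n k T : nat) (dc : nat * seq nat) : bool :=
  [&& dc.1 <= T, uniq dc.2, size dc.2 == k & all (fun m => m < n) dc.2].

Inductive node := Src | DCnode | InN of nat & nat | OutN of nat & nat.
(* InN t m / OutN t m : in-/out-node of server m at time t *)

Inductive capa (R : Type) := CInf | CFin of R.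
Arguments CInf {R}.

Section IFG.
Variable R : realFieldType.
Variables (n s : nat) (alpha beta : R).

Definition ifg_edges (sc : seq (nat * nat)) (dc : nat * seq nat)
  : seq (node * node * capa R) :=
  let T := size sc in
  [seq (Src, InN 0 m, CInf) | m <- iota 0 n]
  ++ flatten [seq [seq (InN t m, OutN t m, CFin alpha) | m <- iota 0 n]
             | t <- iota 0 T.+1]
  ++ flatten [seq (let e := nth (0%N, 0%N) sc t in
                   flatten [seq (if m == e.1 then
                                   [seq (OutN t h, InN t.+1 m, CFin beta)
                                   | h <- cluster_members n s e.2]
                                 else [:: (OutN t m, InN t.+1 m, CInf)])
                           | m <- iota 0 n])
             | t <- iota 0 T]
  ++ [seq (OutN dc.1 m, DCnode, CInf) | m <- dc.2].

Definition crosses (S : node -> bool) (e : node * node * capa R) : bool :=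
  S e.1.1 && ~~ S e.1.2.

Definition is_finite_capa (c : capa R) : bool :=
  if c is CFin _ then true else false.

Local Open Scope ring_scope.

Definition capa_val (c : capa R) : R :=
  if c is CFin x then x else 0.

Definition finite_cut sc dc (S : node -> bool) : Prop :=
  [/\ S Src, ~~ S DCnode &
      all (fun e => crosses S e ==> is_finite_capa e.2) (ifg_edges sc dc)].

Definition cut_capacity sc dc (S : node -> bool) : R :=
  \sum_(e <- ifg_edges sc dc | crosses S e) capa_val e.2.

Definition is_min_cut sc dc (v : R) : Prop :=
  (exists S, finite_cut sc dc S /\ cut_capacity sc dc S = v) /\
  (forall S, finite_cut sc dc S -> v <= cut_capacity sc dc S).

End IFG.

Definition is_Fstar (R : realFieldType) (n k s : nat) (alpha beta : R) (v : R)
  : Prop :=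
  (exists sc dc, valid_scenario n s sc /\ valid_dc n k (size sc) dc /\
                 is_min_cut n s alpha beta sc dc v) /\
  (forall sc dc w, valid_scenario n s sc -> valid_dc n k (size sc) dc ->
                   is_min_cut n s alpha beta sc dc w -> (v <= w)%R).

From HB Require Import structures.
From mathcomp Require Import all_boot all_order all_algebra.
From mathcomp Require Import ring lra zify.
Import Order.TTheory GRing.Theory Num.Theory.

(* Given a finite cut, follow each of the k servers read by the
   data collector back along infinite edges to the first sink-side out-node of
   its chain; these fresh nodes are distinct, and we keep the k earliest ones.
   A fresh node y either pays alpha for its storage edge or is a repaired node
   paying beta for each helper left on the source side, and a sink-side helper
   descends from an earlier kept node of the helper cluster.  So y pays at least
   beta min(r, d - e(y)), r = alpha / beta, where e(y) counts the earlier kept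
   nodes of its helper cluster.  Summing, the cut is at least
   beta (p r + (k - p) d - #arcs), p being the number of nodes where the minimum
   is r and the arcs joining each other node y to the nodes counted by e(y).
   These arcs form a triangle-free graph (they go forward in time, from y's
   helper cluster, which is not y's own cluster) in which the p nodes are
   independent, so a Mantel-type argument bounds #arcs by a (k - a) for some
   a >= p; elementary estimates then give the three regimes.
   Upper bound: let a servers of the first cluster fail in turn, repaired by the
   second cluster, then b servers of the second cluster, repaired by the first,
   and read these a + b servers.  A cut paying the storage (or the repair) edges
   of the first a and the repair edges of the last b costs a alpha (or a d beta)
   plus b (d - a) beta, and (a, b) = (k/2, k - k/2), (k1, k - k1), (k, 0) attain
   the three values. *)

Set Implicit Arguments. Unset Strict Implicit. Unset Printing Implicit Defensive.

Lemma down_closed_subset (T : finType) (X : {set T}) (tau : T -> nat) j :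
  j <= #|X| ->
  exists A : {set T}, [/\ A \subset X, #|A| = j &
    {in X & A, forall x y, tau x < tau y -> x \in A}].
Proof.
elim: j => [|j IH] jX.
  by exists set0; split; rewrite ?sub0set ?cards0 // => x y _; rewrite inE.
have [A [AX cardA downA]] := IH (ltnW jX).
have : 0 < #|X :\: A| by rewrite cardsD (setIidPr AX) cardA subn_gt0.
rewrite card_gt0 => /set0Pn [x0 x0XA].
have [x /setDP[xX xA] xmin] := @arg_minnP _ x0 (mem (X :\: A)) tau x0XA.
exists (x |: A); split.
- by rewrite subUset sub1set xX AX.
- by rewrite cardsU1 (negbTE xA) cardA.
move=> z y zX; rewrite !in_setU1 => /orP[/eqP -> | yA] zy; last by rewrite (downA z y) ?orbT.
apply/orP; right; apply/contraT => zA.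
by have := xmin z; rewrite !inE zA zX leqNgt zy => /(_ isT).
Qed.

Section TriangleFreeArcs.
Variables (T : finType) (A : {set T}) (e : rel T).

Definition adjacent x y := e x y || e y x.
Definition nb_arcs := \sum_x \sum_y (e x y : nat).
Definition degree u := #|[set v | adjacent u v]|.

Hypothesis e_sub : forall x y, e x y -> (x \in A) && (y \in A).
Hypothesis e_asym : forall x y, e x y -> ~~ e y x.
Hypothesis e_triangle_free : forall u v w, adjacent u v -> adjacent u w -> ~~ e v w.

Lemma degreeE w : degree w = \sum_y (e w y : nat) + \sum_z (e z w : nat).
Proof.
rewrite /degree -sum1_card (eq_bigl (adjacent w)) => [|v]; last by rewrite inE.
rewrite big_mkcond -big_split; apply: eq_bigr => v _ /=.
rewrite /adjacent; case ewv: (e w v); last by case: (e v w).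
by rewrite (negbTE (e_asym ewv)).
Qed.

Lemma nb_arcs_le_degree_compl (I : {set T}) :
  {in I &, forall u v, ~~ e u v} -> nb_arcs <= \sum_(w in A :\: I) degree w.
Proof.
move=> indepI; under eq_bigr do rewrite degreeE.
rewrite big_split /= [X in _ <= _ + X](exchange_big_dep xpredT) //=.
rewrite big_mkcond /= -big_split /=; apply: leq_sum => z _.
case: ifP => [_|zAI]; first exact: leq_addr.
rewrite add0n [leqRHS]big_mkcond /=; apply: leq_sum => y _.
case ezy: (e z y) => //; have /andP[zA yA] := e_sub ezy.
rewrite inE yA andbT; case yI: (y \in I) => //=.
have zI : z \in I by move: zAI; rewrite inE zA andbT => /negbFE.
by rewrite (negbTE (indepI z y zI yI)) in ezy.
Qed.

Lemma nb_arcs_le_indep (I : {set T}) :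
  I \subset A -> {in I &, forall u v, ~~ e u v} ->
  exists2 a, #|I| <= a <= #|A| & nb_arcs <= a * (#|A| - a).
Proof.
move=> IA indepI; have cardI := subset_leq_card IA.
have [A0 | [y0 y0A]] := set_0Vmem A.
  exists 0; first by move: cardI; rewrite A0 cards0 => ->.
  rewrite leqn0; apply/eqP/big1 => z _; apply/big1 => y _.
  by case ezy: (e z y) => //; have := e_sub ezy; rewrite A0 inE.
have [u uA umax] := @arg_maxnP _ y0 (mem A) degree y0A.
set N := [set v | adjacent u v].
have NA : N \subset A.
  by apply/subsetP => v; rewrite inE /adjacent => /orP[] /e_sub /andP[].
have sum_le (B : {set T}) : B \subset A -> \sum_(w in B) degree w <= #|B| * degree u.
  move=> BA; rewrite -sum_nat_const; apply: leq_sum => w wB.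
  exact/umax/(subsetP BA).
have cardAD (B : {set T}) : B \subset A -> #|A :\: B| = #|A| - #|B|.
  by move=> BA; rewrite cardsD (setIidPr BA).
have arcsN : nb_arcs <= (#|A| - degree u) * degree u.
  rewrite -[degree u]/#|N| -cardAD //.
  apply: leq_trans (nb_arcs_le_degree_compl _) (sum_le _ (subsetDl _ _)).
  by move=> v w; rewrite !inE => uv uw; exact: e_triangle_free uv uw.
have arcsI : nb_arcs <= (#|A| - #|I|) * degree u.
  rewrite -cardAD //.
  exact: leq_trans (nb_arcs_le_degree_compl indepI) (sum_le _ (subsetDl _ _)).
have degA : degree u <= #|A| by exact: subset_leq_card.
case: (leqP #|I| (degree u)) => Ideg.
  by exists (degree u); rewrite ?Ideg // mulnC.
exists #|I|; rewrite ?leqnn //; apply: leq_trans arcsI _.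
by rewrite mulnC leq_mul2r ltnW ?orbT.
Qed.

End TriangleFreeArcs.

Definition min_sum_bound (R : pzRingType) (k d p a : nat) (r : R) : R :=
  (p%:R * r + (k - p)%:R * d%:R - (a * (k - a))%:R)%R.

Section MinSum.
Variables (R : realFieldType) (T : finType) (A : {set T}) (tau cl c : T -> nat).
Variables (r : R) (d : nat).
Hypothesis c_neq_cl : {in A, forall y, c y != cl y}.
Local Open Scope ring_scope.

Definition nb_earlier y := #|[set z in A | (tau z < tau y)%N && (cl z == c y)]|.

Let Q := [set y in A | d%:R - (nb_earlier y)%:R < r].
Let arc z y := [&& z \in A, y \in Q, (tau z < tau y)%N & cl z == c y].

Let QA : Q \subset A.
Proof. by apply/subsetP => y; rewrite inE => /andP[]. Qed.

Let arc_sub z y : arc z y -> (z \in A) && (y \in A).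
Proof. by case/and4P=> -> /(subsetP QA) ->. Qed.

Let arc_asym z y : arc z y -> ~~ arc y z.
Proof. by case/and4P=> _ _ zy _; apply/negP => /and4P[_ _ yz _]; lia. Qed.

Let arc_triangle_free u v w : adjacent arc u v -> adjacent arc u w -> ~~ arc v w.
Proof.
have c_neq_cl_tgt x y : arc x y -> c y != cl y.
  by move=> /arc_sub /andP[_]; exact: c_neq_cl.
have c_neq_cl_src x y : arc x y -> c x != cl x.
  by move=> /arc_sub /andP[+ _]; exact: c_neq_cl.
rewrite /adjacent => uv uw; apply/negP => vw.
move: (vw) => /and4P[_ _ _ /eqP cvw].
case/orP: uv => [] uv; case/orP: uw => [] uw;
  move: (uv) (uw) => /and4P[_ _ tuv /eqP cuv] /and4P[_ _ tuw /eqP cuw].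
- by move: (c_neq_cl_tgt _ _ uv); rewrite -cuv cvw -cuw eqxx.
- by move: vw => /and4P[_ _ tvw _]; lia.
- by move: (c_neq_cl_tgt _ _ uv); rewrite -cuv cvw -cuw eqxx.
- by move: (c_neq_cl_tgt _ _ vw); rewrite -cvw cuv -cuw eqxx.
Qed.

Let nb_arcsE : nb_arcs arc = (\sum_(y in Q) nb_earlier y)%N.
Proof.
rewrite /nb_arcs exchange_big [RHS]big_mkcond /=; apply: eq_bigr => y _.
rewrite /nb_earlier -sum1_card; case yQ: (y \in Q); last first.
  by rewrite big1 // => z _; rewrite /arc yQ andbF.
by rewrite [RHS]big_mkcond; apply: eq_bigr => z _; rewrite /arc yQ !inE; case: (z \in A).
Qed.

Let min_sumE :
  \sum_(y in A) Num.min r (d%:R - (nb_earlier y)%:R) =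
  #|A :\: Q|%:R * r + #|Q|%:R * d%:R - (nb_arcs arc)%:R.
Proof.
rewrite (big_setID Q) /= (setIidPr QA) addrC -addrA mulr_natl.
rewrite (eq_bigr (fun=> r)) => [|y]; last first.
  by rewrite !inE => /andP[yQ yA]; rewrite yA /= -leNgt in yQ; exact: min_l.
rewrite sumr_const; congr (_ + _).
rewrite (eq_bigr (fun y => d%:R - (nb_earlier y)%:R)) => [|y]; last first.
  by rewrite inE => /andP[_ ?]; apply/min_r/ltW.
by rewrite sumrB sumr_const nb_arcsE natr_sum mulr_natl.
Qed.

Lemma min_sum_ge : exists p a : nat, [/\ (p <= a)%N, (a <= #|A|)%N &
  min_sum_bound #|A| d p a r <= \sum_(y in A) Num.min r (d%:R - (nb_earlier y)%:R)].
Proof.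
have indepAQ : {in A :\: Q &, forall u v, ~~ arc u v}.
  by move=> u v _; rewrite inE => /andP[vQ _]; apply/negP => /and4P[_ vQ' _ _]; rewrite vQ' in vQ.
have [a /andP[pa ak] arcs_le] :=
  nb_arcs_le_indep arc_sub arc_asym arc_triangle_free (subsetDl A Q) indepAQ.
exists #|A :\: Q|, a; split=> //.
rewrite min_sumE /min_sum_bound cardsD (setIidPr QA) subKn ?subset_leq_card //.
by rewrite lerD2l lerN2 ler_nat.
Qed.

End MinSum.

Lemma mul_subn_le_half_uphalf a k : a <= k -> a * (k - a) <= k./2 * uphalf k.
Proof.
move=> ak; have := odd_double_half k; rewrite uphalf_half -addnn => kE.
have [ah | ha] := leqP a k./2.
  have : (a * (uphalf k - a) <= k./2 * (uphalf k - a))%N by rewrite leq_mul2r ah orbT.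
  rewrite uphalf_half; nia.
have : (k./2 * (a - uphalf k) <= a * (a - uphalf k))%N by rewrite leq_mul2r ltnW ?orbT.
rewrite uphalf_half; nia.
Qed.

Section MinSumBound.
Variables (R : realFieldType) (k d p a : nat) (r : R).
Local Open Scope ring_scope.
Hypotheses (pa : (p <= a)%N) (ak : (a <= k)%N).

Lemma min_sum_bound_ge_large : d%:R <= r ->
  (k * d)%:R - (k./2 * uphalf k)%:R <= min_sum_bound k d p a r.
Proof.
move=> dr; rewrite /min_sum_bound.
have prod_le : (a * (k - a))%:R <= (k./2 * uphalf k)%:R :> R.
  by rewrite ler_nat mul_subn_le_half_uphalf.
have pk : (p <= k)%N by apply: leq_trans ak.
have : p%:R * d%:R <= p%:R * r by rewrite ler_wpM2l.
rewrite natrB // natrM; lra.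
Qed.

Lemma min_sum_bound_ge_small : r <= d%:R - k%:R ->
  k%:R * r <= min_sum_bound k d p a r.
Proof.
move=> rdk; rewrite /min_sum_bound !natrM !natrB //; last exact: leq_trans ak.
have hp : p%:R <= a%:R :> R by rewrite ler_nat.
have ha : a%:R <= k%:R :> R by rewrite ler_nat.
have : (0 : R) <= p%:R by [].
nra.
Qed.

Lemma min_sum_bound_ge_mid k1 : (uphalf k <= k1 <= k)%N ->
  d%:R + k%:R - 2 * k1%:R - 1 <= r ->
  r < Num.min (d%:R + k%:R - 2 * k1%:R + 1) d%:R ->
  k1%:R * r + (d%:R - k1%:R) * (k%:R - k1%:R) <= min_sum_bound k d p a r.
Proof.
move=> /andP[hk1 k1k] lo; rewrite lt_min => /andP[hi rd].
rewrite /min_sum_bound !natrM !natrB //; last exact: leq_trans ak.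
have kk1 : k%:R <= 2 * k1%:R :> R.
  rewrite -natrM ler_nat; move: hk1; have := odd_double_half k.
  rewrite uphalf_half -addnn; lia.
have hp : p%:R <= a%:R :> R by rewrite ler_nat.
have ha : a%:R <= k%:R :> R by rewrite ler_nat.
have hk : k1%:R <= k%:R :> R by rewrite ler_nat.
have p0 : (0 : R) <= p%:R by [].
(* With t := d - r the claim reads a (k - a) <= k1 (k - k1) + (k1 - p) t, where
   2 k1 - k - 1 < t <= 2 k1 - k + 1; the products below certify it in each of
   the integral cases a < k1, p <= k1 <= a and k1 < p <= a. *)
case: (leqP k1 a) => [k1a | ak1].
  have h1 : k1%:R <= a%:R :> R by rewrite ler_nat.
  have e1 : 0 <= (a%:R - k1%:R) * (a%:R + k1%:R - k%:R) :> R by apply: mulr_ge0; lra.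
  case: (leqP p k1) => [pk1 | k1p].
    have h2 : p%:R <= k1%:R :> R by rewrite ler_nat.
    have e2 : 0 <= (k1%:R - p%:R) * (d%:R - r) :> R by apply: mulr_ge0; lra.
    nra.
  have h2 : k1%:R + 1 <= p%:R :> R by rewrite natr1 ler_nat.
  have e3 : 0 <= (a%:R - p%:R) * (a%:R + p%:R - k%:R) :> R by apply: mulr_ge0; lra.
  have e4 : 0 <= (p%:R - k1%:R) * (2 * k1%:R - k%:R + 1 - (d%:R - r)) :> R.
    by apply: mulr_ge0; lra.
  nra.
have h1 : a%:R + 1 <= k1%:R :> R by rewrite natr1 ler_nat.
have e1 : 0 <= (k1%:R - a%:R) * (k%:R - k1%:R - a%:R + (d%:R - r)) :> R.
  by apply: mulr_ge0; lra.
have e2 : 0 <= (a%:R - p%:R) * (d%:R - r) :> R by apply: mulr_ge0; lra.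
nra.
Qed.

End MinSumBound.

Lemma all_flatten (T : Type) (P : pred T) (ss : seq (seq T)) :
  all P (flatten ss) = all (all P) ss.
Proof. by elim: ss => //= x ss IH; rewrite all_cat IH. Qed.

Lemma sum_iota_ord (V : nmodType) N (F : nat -> V) :
  (\sum_(t <- iota 0 N) F t = \sum_(t < N) F t)%R.
Proof. by rewrite -(big_mkord xpredT) /index_iota subn0. Qed.

Section CutCapacity.
Variables (R : realFieldType) (n s : nat) (alpha beta : R).
Variables (sc : seq (nat * nat)) (dc : nat * seq nat) (S : node -> bool).
Local Notation T := (size sc).

Definition failed t := (nth (0, 0) sc t).1.
Definition helper_cluster t := (nth (0, 0) sc t).2.

Local Open Scope ring_scope.

Definition storage_cost t m := if S (InN t m) && ~~ S (OutN t m) then alpha else 0.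
Definition repair_cost t m :=
  if m == failed t then
    \sum_(h <- cluster_members n s (helper_cluster t) | S (OutN t h) && ~~ S (InN t.+1 m)) beta
  else 0.

Lemma storage_cost_ge0 t m : 0 <= alpha -> 0 <= storage_cost t m.
Proof. by rewrite /storage_cost; case: ifP. Qed.

Lemma repair_cost_ge0 t m : 0 <= beta -> 0 <= repair_cost t m.
Proof. by rewrite /repair_cost => beta_ge0; case: ifP => // _; exact: sumr_ge0. Qed.

Lemma cut_capacityE : cut_capacity n s alpha beta sc dc S =
  \sum_(t <- iota 0 T.+1) \sum_(m <- iota 0 n) storage_cost t m +
  \sum_(t <- iota 0 T) \sum_(m <- iota 0 n) repair_cost t m.
Proof.
(* Generalizing [T.+1] keeps [iota 0 T.+1] from being unfolded by [big_cat]. *)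
rewrite /cut_capacity /ifg_edges; move: T.+1 => T1.
rewrite !big_cat /= !big_map big1 // add0r [X in _ + (_ + X)]big1 // addr0.
congr (_ + _).
  rewrite big_flatten big_map; apply: eq_bigr => t _.
  by rewrite big_map big_mkcond; apply: eq_bigr => m _.
rewrite big_flatten big_map; apply: eq_bigr => t _.
rewrite big_flatten big_map; apply: eq_bigr => m _.
rewrite /repair_cost /failed /helper_cluster; case: eqP => _.
  by rewrite big_map.
by rewrite big_mkcond big_seq1; case: ifP.
Qed.

Hypothesis fc : finite_cut n s alpha beta sc dc S.

Lemma cut_initial m : (m < n)%N -> S (InN 0 m).
Proof.
move=> mn; case: fc => hS _; rewrite /ifg_edges; move: T.+1 => T1.
rewrite !all_cat all_map => /andP[/allP /(_ m) + _].
by rewrite mem_iota add0n mn /crosses /= hS => /(_ isT); case: (S _).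
Qed.

Lemma cut_persistent t m : (t < T)%N -> (m < n)%N -> m != failed t ->
  S (OutN t m) -> S (InN t.+1 m).
Proof.
move=> tT mn mt Stm; case: fc => _ _; rewrite /ifg_edges; move: T.+1 => T1.
rewrite !all_cat.
case/and4P=> _ _ + _; rewrite all_flatten all_map => /allP /(_ t).
rewrite mem_iota add0n tT => /(_ isT) /=; rewrite all_flatten all_map => /allP /(_ m).
rewrite mem_iota add0n mn /= (negbTE mt) /= andbT /crosses /= Stm => /(_ isT).
by case: (S _).
Qed.

Lemma cut_collector m : m \in dc.2 -> ~~ S (OutN dc.1 m).
Proof.
move=> mK; case: fc => _ hD; rewrite /ifg_edges; move: T.+1 => T1.
rewrite !all_cat.
case/and4P=> _ _ _; rewrite all_map => /allP /(_ m mK).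
by rewrite /crosses /= hD andbT implybF.
Qed.

End CutCapacity.

Lemma cluster_membersP n s i h : i < s -> h \in cluster_members n s i ->
  (h < n) && (cluster_of n s h == i).
Proof.
rewrite /cluster_members /cluster_of mem_iota => i_lt_s /andP[h1 h2].
set d := clust_d n s in h1 h2 *.
have d_gt0 : 0 < d by case: d h1 h2 => // h1 h2; lia.
have dsn : d * s <= n by rewrite /d /clust_d leq_trunc_div.
have hsd : h < s * d by nia.
rewrite hsd (_ : h %/ d = i) ?eqxx ?andbT; first by nia.
by rewrite -(subnKC h1) divnMDl // divn_small ?addn0 // ltn_subLR.
Qed.

Section FreshSinkEvents.
Variables (R : realFieldType) (n s k : nat) (alpha beta : R).
Variables (sc : seq (nat * nat)) (dc : nat * seq nat) (S : node -> bool).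
Hypotheses (n_gt0 : 0 < n) (vsc : valid_scenario n s sc).
Hypotheses (vdc : valid_dc n k (size sc) dc) (fc : finite_cut n s alpha beta sc dc S).
Local Notation T := (size sc).

(* [OutN t m] is on the sink side and is not reached from a sink-side
   out-node of time [t - 1] through an infinite edge. *)
Definition fresh t m :=
  ~~ S (OutN t m) && ~~ [&& 0 < t, m != failed sc t.-1 & ~~ S (OutN t.-1 m)].

Fixpoint origin t m :=
  if t is t'.+1 then
    if (m != failed sc t') && ~~ S (OutN t' m) then origin t' m else t
  else 0.

Lemma originP t m : ~~ S (OutN t m) -> fresh (origin t m) m && (origin t m <= t).
Proof.
elim: t => [|t IH] Stm /=; first by rewrite /fresh Stm.
case: ifP => [/andP[_ /IH /andP[-> le_t]] | not_inf]; first by rewrite ltnW.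
by rewrite /fresh Stm /= not_inf leqnn.
Qed.

Definition event := ('I_T.+1 * 'I_n)%type.
Definition fresh_events := [set y : event | fresh y.1 y.2].
Definition ev_time (y : event) : nat := y.1.
Definition ev_cluster (y : event) := cluster_of n s y.2.
(* The cluster that repaired [y]; an event whose in-node lies on the source
   side pays [alpha] anyway and gets a dummy colour different from its cluster. *)
Definition ev_helper (y : event) :=
  if S (InN y.1 y.2) then (ev_cluster y).+1 else helper_cluster sc y.1.-1.

Definition trace t m : event := (inord (origin t m), insubd (Ordinal n_gt0) m).

Lemma trace_server t m : m < n -> val (trace t m).2 = m.
Proof. by move=> mn; rewrite val_insubd mn. Qed.

Lemma traceP t m : t <= T -> m < n -> ~~ S (OutN t m) ->
  trace t m \in fresh_events /\ ev_time (trace t m) <= t.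
Proof.
move=> tT mn Stm; have /andP[fr le_t] := originP Stm.
have oT : origin t m < T.+1 by rewrite ltnS (leq_trans le_t).
by rewrite inE /ev_time /= inordK // trace_server.
Qed.

Lemma card_fresh_events : k <= #|fresh_events|.
Proof.
case/and4P: vdc => tT uniqK /eqP <- /allP Kn.
rewrite -(size_map (trace dc.1)) cardE; apply: uniq_leq_size.
  rewrite map_inj_in_uniq // => x y xK yK /(congr1 (fun e => val e.2)).
  by rewrite !trace_server ?Kn.
move=> _ /mapP[m mK ->]; rewrite mem_enum.
by have [] := traceP tT (Kn m mK) (cut_collector fc mK).
Qed.

Lemma fresh_repaired y : y \in fresh_events -> ~~ S (InN y.1 y.2) ->
  [/\ 0 < y.1, val y.2 = failed sc y.1.-1 & y.1.-1 < T].
Proof.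
case: y => [t m]; rewrite inE /fresh /= => /andP[_ not_inf] Sin.
have t_gt0 : 0 < t.
  by rewrite lt0n; apply: contra Sin => /eqP t0; rewrite t0 (cut_initial fc (ltn_ord m)).
have tT : t.-1 < T by rewrite prednK // -ltnS.
split=> //; apply/eqP/negP => /negP mt; move: not_inf; rewrite t_gt0 mt /= => /negPn Sout.
by move: Sin; rewrite -(prednK t_gt0) (cut_persistent fc tT (ltn_ord m) mt Sout).
Qed.

Lemma helper_neq_cluster : {in fresh_events, forall y, ev_helper y != ev_cluster y}.
Proof.
move=> y fy; rewrite /ev_helper; case: ifP => Sin; first by rewrite neq_ltn ltnSn orbT.
rewrite /ev_cluster; have [_ -> tT] := fresh_repaired fy (negbT Sin).
by have /and3P[] := allP vsc _ (mem_nth (0, 0) tT).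
Qed.

Local Open Scope ring_scope.
Hypotheses (alpha_gt0 : 0 < alpha) (beta_gt0 : 0 < beta).

Definition ev_cost (y : event) := storage_cost alpha S y.1 y.2 +
  (if (0 < y.1)%N then repair_cost n s beta sc S y.1.-1 y.2 else 0).

Lemma ev_cost_ge0 y : 0 <= ev_cost y.
Proof.
rewrite /ev_cost; apply: addr_ge0; first exact: storage_cost_ge0 (ltW alpha_gt0).
by case: ifP => // _; exact: repair_cost_ge0 (ltW beta_gt0).
Qed.

Lemma sum_ev_cost : \sum_y ev_cost y = cut_capacity n s alpha beta sc dc S.
Proof.
rewrite /ev_cost big_split /= cut_capacityE !sum_iota_ord.
rewrite -(pair_bigA _ (fun (t : 'I_T.+1) (m : 'I_n) => storage_cost alpha S t m)).
rewrite -(pair_bigA _ (fun (t : 'I_T.+1) (m : 'I_n) =>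
  if (0 < t)%N then repair_cost n s beta sc S t.-1 m else 0)) /=.
congr (_ + _); first by apply: eq_bigr => t _; rewrite sum_iota_ord.
by rewrite big_ord_recl big1 ?add0r //; apply: eq_bigr => t _; rewrite sum_iota_ord.
Qed.

Section DownClosed.
Variable A : {set event}.
Hypotheses (A_fresh : A \subset fresh_events)
  (A_down : {in fresh_events & A, forall x y, (ev_time x < ev_time y)%N -> x \in A}).
Local Notation earlier := (nb_earlier A ev_time ev_cluster ev_helper).

Lemma count_sink_helpers_le y : y \in A -> ~~ S (InN y.1 y.2) ->
  (count (fun h => ~~ S (OutN y.1.-1 h)) (cluster_members n s (helper_cluster sc y.1.-1))
    <= earlier y)%N.
Proof.
move=> yA Sin; have fy := subsetP A_fresh y yA.
have [t_gt0 ym tT] := fresh_repaired fy Sin.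
have hs : (helper_cluster sc y.1.-1 < s)%N.
  by have /and3P[] := allP vsc _ (mem_nth (0, 0) tT).
rewrite -size_filter /nb_earlier cardE -(size_map (trace y.1.-1)).
apply: uniq_leq_size.
  rewrite map_inj_in_uniq ?filter_uniq ?iota_uniq // => h1 h2.
  rewrite !mem_filter => /andP[_ /(cluster_membersP hs) /andP[h1n _]].
  move=> /andP[_ /(cluster_membersP hs) /andP[h2n _]] /(congr1 (fun e => val e.2)).
  by rewrite !trace_server.
move=> z /mapP[h]; rewrite mem_filter => /andP[Sh /(cluster_membersP hs) /andP[hn /eqP hcl]] ->.
have [fh le_t] := traceP (ltnW tT) hn Sh.
have lt_t : (ev_time (trace y.1.-1 h) < ev_time y)%N.
  by rewrite (leq_ltn_trans le_t) // prednK.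
rewrite mem_enum inE (A_down fh yA lt_t) lt_t /ev_cluster /ev_helper trace_server //.
by rewrite hcl (negbTE Sin) eqxx.
Qed.

Lemma ev_cost_ge y : y \in A ->
  beta * Num.min (alpha / beta) ((n %/ s)%:R - (earlier y)%:R) <= ev_cost y.
Proof.
move=> yA; have fy := subsetP A_fresh y yA.
case Sin: (S (InN y.1 y.2)).
  move: (fy); rewrite inE => /andP[Sout _].
  rewrite /ev_cost {1}/storage_cost Sin Sout /=.
  apply: le_trans (_ : alpha <= _); last first.
    by rewrite lerDl; case: ifP => // _; exact: repair_cost_ge0 (ltW beta_gt0).
  by rewrite -ler_pdivlMl // mulrC ge_min lexx.
have [t_gt0 ym tT] := fresh_repaired fy (negbT Sin).
have count_le := count_sink_helpers_le yA (negbT Sin).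
rewrite /ev_cost t_gt0 /repair_cost -ym eqxx prednK // Sin.
under eq_bigl do rewrite andbT.
rewrite big_const_seq iter_addr_0 -[beta *+ _]mulr_natr.
set cnt := count _ _.
have d_le : (n %/ s)%:R - (earlier y)%:R <= cnt%:R :> R.
  rewrite lerBlDr -natrD ler_nat.
  have := count_predC (fun h => S (OutN y.1.-1 h)) (cluster_members n s (helper_cluster sc y.1.-1)).
  by rewrite size_iota /clust_d -/cnt => <-; rewrite leq_add2l.
have := storage_cost_ge0 S y.1 y.2 (ltW alpha_gt0).
have : Num.min (alpha / beta) ((n %/ s)%:R - (earlier y)%:R) <= cnt%:R.
  by rewrite ge_min d_le orbT.
move=> /(ler_wpM2l (ltW beta_gt0)); lra.
Qed.

Lemma cut_capacity_ge_min_sum :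
  beta * \sum_(y in A) Num.min (alpha / beta) ((n %/ s)%:R - (earlier y)%:R) <=
  cut_capacity n s alpha beta sc dc S.
Proof.
rewrite -sum_ev_cost mulr_sumr [X in _ <= X](bigID (mem A)) /= -[X in X <= _]addr0.
apply: lerD; first by apply: ler_sum => y; exact: ev_cost_ge.
by apply: sumr_ge0 => y _; exact: ev_cost_ge0.
Qed.

End DownClosed.

Lemma finite_cut_capacity_ge : exists p a, [/\ (p <= a)%N, (a <= k)%N &
  beta * min_sum_bound k (n %/ s) p a (alpha / beta) <= cut_capacity n s alpha beta sc dc S].
Proof.
have [A [A_fresh cardA A_down]] := down_closed_subset ev_time card_fresh_events.
have helper_neq : {in A, forall y, ev_helper y != ev_cluster y}.
  by move=> y /(subsetP A_fresh); exact: helper_neq_cluster.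
have [p [a [pa ak le_sum]]] := min_sum_ge ev_time (alpha / beta) (n %/ s) helper_neq.
exists p, a; rewrite -cardA; split=> //.
apply: le_trans (cut_capacity_ge_min_sum A_fresh A_down).
by rewrite ler_wpM2l // ltW.
Qed.

End FreshSinkEvents.

Lemma count_iota_ltn a N : a <= N -> count (fun i => i < a) (iota 0 N) = a.
Proof.
move=> aN; rewrite -size_filter.
by have := filter_iota_ltn 0 aN; rewrite add0n => ->; rewrite size_iota.
Qed.

Section WorstCase.
Variables (R : realFieldType) (n s : nat) (alpha beta : R) (a b : nat) (cut_storage : bool).
Local Notation d := (n %/ s).
Hypotheses (s_ge2 : 2 <= s) (a_le_d : a <= d) (b_le_d : b <= d).

Let d2_le_n : 2 * d <= n.
Proof. by apply: leq_trans (leq_trunc_div n s); rewrite mulnC leq_mul2l s_ge2 orbT. Qed.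

Lemma cluster_of_first m : m < d -> cluster_of n s m = 0.
Proof.
move=> md; have msd : m < s * d by apply: leq_trans md _; rewrite leq_pmull // ltnW.
by rewrite /cluster_of /clust_d msd divn_small.
Qed.

Lemma cluster_of_second m : d <= m < 2 * d -> cluster_of n s m = 1.
Proof.
case/andP=> dm md.
have msd : m < s * d by apply: leq_trans md _; rewrite leq_mul2r s_ge2 orbT.
have d_gt0 : 0 < d by lia.
rewrite /cluster_of /clust_d msd -(subnKC dm) -{1}(mul1n d) divnMDl // divn_small //.
lia.
Qed.

Definition worst_scenario :=
  [seq (i, 1) | i <- iota 0 a] ++ [seq (d + j, 0) | j <- iota 0 b].
Definition worst_collector := (a + b, iota 0 a ++ iota d b).

(* Server [m < a] fails at time [m] and server [d + j], [j < b], at time [a + j];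
   each stays on the source side up to its failure.  With [cut_storage] the
   repaired in-node of a server [m < a] is also on the source side, so the cut
   pays its storage edge instead of its repair edges. *)
Definition worst_cut (x : node) : bool :=
  match x with
  | Src => true
  | DCnode => false
  | InN t m => if m < a then (t <= m) || cut_storage && (t == m.+1)
               else if d <= m < d + b then t <= a + (m - d) else true
  | OutN t m => if m < a then t <= m
                else if d <= m < d + b then t <= a + (m - d) else true
  end.

Lemma size_worst_scenario : size worst_scenario = a + b.
Proof. by rewrite size_cat !size_map !size_iota. Qed.

Lemma nth_worst_scenario t : t < a + b ->
  nth (0, 0) worst_scenario t = if t < a then (t, 1) else (d + (t - a), 0).
Proof.
move=> tab; rewrite nth_cat size_map size_iota; case: ifP => ta.
  by rewrite (nth_map 0) ?size_iota // nth_iota.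
by rewrite (nth_map 0) ?size_iota ?nth_iota //; lia.
Qed.

Lemma valid_worst_scenario : valid_scenario n s worst_scenario.
Proof.
rewrite /valid_scenario all_cat !all_map; apply/andP; split; apply/allP => x.
  by rewrite mem_iota /valid_event /= => xa; rewrite cluster_of_first; lia.
by rewrite mem_iota /valid_event /= => xb; rewrite cluster_of_second; lia.
Qed.

Lemma valid_worst_collector : valid_dc n (a + b) (size worst_scenario) worst_collector.
Proof.
rewrite /valid_dc size_worst_scenario /= leqnn size_cat !size_iota eqxx cat_uniq.
rewrite !iota_uniq /= andbT; apply/andP; split.
  by apply/hasPn => x; rewrite !mem_iota => /andP[dx _]; apply/negP => /andP[_]; lia.
by apply/allP => x; rewrite mem_cat !mem_iota; lia.
Qed.

Lemma worst_cut_finite : finite_cut n s alpha beta worst_scenario worst_collector worst_cut.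
Proof.
split=> //; rewrite /ifg_edges; move: (size _).+1 => T1; rewrite !all_cat.
apply/and4P; split.
- by rewrite all_map; apply/allP => m _; rewrite /crosses /=; do ![case: ifP].
- rewrite all_flatten all_map; apply/allP => t _ /=.
  by rewrite all_map; apply/allP => m _ /=; rewrite implybT.
- rewrite all_flatten all_map; apply/allP => t; rewrite size_worst_scenario mem_iota => tab /=.
  rewrite all_flatten all_map; apply/allP => m _ /=; case: ifP => [_|].
    by rewrite all_map; apply/allP => h _ /=; rewrite implybT.
  rewrite nth_worst_scenario; last by lia.
  rewrite /= andbT /crosses /=; case: ifP => ta /eqP /= mt; do ![case: ifP] => //=; lia.
rewrite all_map; apply/allP => m; rewrite mem_cat !mem_iota /crosses /= andbT => mK.
by do ![case: ifP] => //=; lia.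
Qed.

Local Open Scope ring_scope.

Lemma worst_storage :
  \sum_(t <- iota 0 (a + b).+1) \sum_(m <- iota 0 n) storage_cost alpha worst_cut t m =
  if cut_storage then a%:R * alpha else 0.
Proof.
have costE t m : storage_cost alpha worst_cut t m =
    if [&& cut_storage, (m < a)%N & t == m.+1] then alpha else 0.
  rewrite /storage_cost /=; case: ltnP => //= ma; last by rewrite andbN andbF.
  by case: eqP => [->|]; rewrite ?ltnn ?andbT ?andbF ?orbF ?andbN.
under eq_bigr do under eq_bigr do rewrite costE.
case: cut_storage => /=; last by rewrite big1 // => t _; rewrite big1.
rewrite exchange_big /= (eq_bigr (fun m => if (m < a)%N then alpha else 0)) => [|m _].
  by rewrite -big_mkcond big_const_seq iter_addr_0 count_iota_ltn ?mulr_natl //; lia.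
case: ltnP => ma; rewrite ?andTb ?andFb; last by rewrite big1.
have m1 : m.+1 \in iota 0 (a + b).+1 by rewrite mem_iota; lia.
by rewrite (bigD1_seq m.+1 m1 (iota_uniq _ _)) /= eqxx big1 ?addr0 // => t /negbTE ->.
Qed.

Lemma worst_repair_at t : (t < a + b)%N ->
  \sum_(m <- iota 0 n) repair_cost n s beta worst_scenario worst_cut t m =
  if (t < a)%N then (if cut_storage then 0 else d%:R * beta) else (d - a)%:R * beta.
Proof.
move=> tab; have failed_n : (failed worst_scenario t < n)%N.
  by rewrite /failed nth_worst_scenario //; case: ifP => /=; lia.
rewrite (bigD1_seq (failed worst_scenario t)) ?iota_uniq ?mem_iota //=.
rewrite big1 ?addr0 => [|m /negbTE mt]; last by rewrite /repair_cost mt.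
rewrite /repair_cost eqxx /failed /helper_cluster nth_worst_scenario //.
rewrite big_const_seq iter_addr_0 /cluster_members /clust_d.
case: ifP => ta /=.
  rewrite ta ltnn eqxx andbT /=; case: cut_storage => /=.
    by rewrite (eq_count (a2 := pred0)) ?count_pred0 // => h; rewrite andbF.
  rewrite (eq_in_count (a2 := predT)) ?count_predT ?size_iota ?mulr_natl // => h.
  by rewrite mem_iota mul1n => hd; do ![case: ifP] => //=; lia.
have -> : (d + (t - a) < a)%N = false by lia.
have -> : (d <= d + (t - a) < d + b)%N by lia.
rewrite (_ : (t.+1 <= a + _)%N = false) ?andbT; last by lia.
rewrite mul0n (eq_in_count (a2 := predC (fun h => h < a)%N)) => [|h]; last first.
  by rewrite mem_iota add0n => hd /=; do ![case: ifP] => //=; lia.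
have := count_predC (fun h => h < a)%N (iota 0 d).
rewrite size_iota count_iota_ltn // => countE.
have -> : count (predC (fun h => h < a)%N) (iota 0 d) = (d - a)%N by lia.
by rewrite mulr_natl.
Qed.

Lemma worst_cut_capacity :
  cut_capacity n s alpha beta worst_scenario worst_collector worst_cut =
  (if cut_storage then a%:R * alpha else (a * d)%:R * beta) + (b * (d - a))%:R * beta.
Proof.
rewrite cut_capacityE size_worst_scenario worst_storage iotaD big_cat /=.
rewrite (eq_big_seq (fun=> if cut_storage then 0 else d%:R * beta)) => [|t]; last first.
  by rewrite mem_iota => /andP[_ ta]; rewrite worst_repair_at ?ta //; lia.
rewrite [X in _ + (_ + X) = _](eq_big_seq (fun=> (d - a)%:R * beta)) => [|t]; last first.
  by rewrite mem_iota => /andP[a_le_t tab]; rewrite worst_repair_at ?ltnNge ?a_le_t //; lia.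
rewrite !big_const_seq !count_predT !size_iota !iter_addr_0.
by case: cut_storage => /=; ring.
Qed.

End WorstCase.

Local Open Scope ring_scope.

Lemma is_Fstar_worst_case (R : realFieldType) (n k s a b : nat) (cut_storage : bool)
    (alpha beta v : R) :
  (0 < n)%N -> (2 <= s)%N -> (a <= n %/ s)%N -> (b <= n %/ s)%N -> (a + b)%N = k ->
  0 < alpha -> 0 < beta ->
  v = (if cut_storage then a%:R * alpha else (a * (n %/ s))%:R * beta) +
      (b * (n %/ s - a))%:R * beta ->
  (forall p c, (p <= c <= k)%N -> v <= beta * min_sum_bound k (n %/ s) p c (alpha / beta)) ->
  is_Fstar n k s alpha beta v.
Proof.
move=> n_gt0 s_ge2 a_le b_le abk alpha_gt0 beta_gt0 vE v_le.
have lower sc dc S : valid_scenario n s sc -> valid_dc n k (size sc) dc ->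
    finite_cut n s alpha beta sc dc S -> v <= cut_capacity n s alpha beta sc dc S.
  move=> vsc vdc fc.
  have [p [c [pc ck]]] := finite_cut_capacity_ge n_gt0 vsc vdc fc alpha_gt0 beta_gt0.
  by apply: le_trans; apply: v_le; rewrite pc.
have vsc := valid_worst_scenario s_ge2 a_le b_le.
have vdc := valid_worst_collector s_ge2 a_le b_le; rewrite abk in vdc.
have fc := worst_cut_finite alpha beta cut_storage s_ge2 a_le b_le.
split; last by move=> sc dc w vsc' vdc' [[S [fc' <-]] _]; exact: lower.
exists (worst_scenario n s a b), (worst_collector n s a b); do 3 split=> //.
by exists (worst_cut n s a b cut_storage); rewrite (worst_cut_capacity _ _ _ s_ge2 a_le b_le) vE.
by move=> S; exact: lower.
Qed.

Theorem lemma3 (R : realFieldType) (n k s : nat) (alpha beta : R) :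
  (0 < n)%N -> (0 < k)%N -> (2 <= s)%N -> (s <= n %/ k)%N ->
  0 < alpha -> 0 < beta ->
  let d := (n %/ s)%N in
  [/\ ((d%:R <= alpha / beta) ->
        is_Fstar n k s alpha beta
          ((k * d)%:R * beta - ((k./2) * uphalf k)%:R * beta)),
      (forall k1 : nat, (uphalf k <= k1 <= k)%N ->
        d%:R + k%:R - 2 * k1%:R - 1 <= alpha / beta ->
        alpha / beta < Num.min (d%:R + k%:R - 2 * k1%:R + 1) d%:R ->
        is_Fstar n k s alpha beta
          (k1%:R * alpha + (d%:R - k1%:R) * (k%:R - k1%:R) * beta)) &
      (alpha / beta < d%:R - k%:R - 1 ->
        is_Fstar n k s alpha beta (k%:R * alpha))].
Proof.
move=> n_gt0 k_gt0 s_ge2 s_le alpha_gt0 beta_gt0 d.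
have k_le_d : (k <= d)%N by rewrite /d leq_divRL ?(leq_trans _ s_ge2) // mulnC -leq_divRL.
have alphaE : alpha = beta * (alpha / beta) by rewrite mulrC divfK ?gt_eqF.
have halvesE : (k./2 + uphalf k)%N = k by rewrite uphalf_half addnC -addnA addnn odd_double_half.
split.
- move=> d_le; apply: (@is_Fstar_worst_case _ _ _ _ k./2 (uphalf k) false) => //; try lia.
    have -> : (k * d = k./2 * d + uphalf k * (d - k./2) + k./2 * uphalf k)%N by nia.
    by rewrite !natrD /=; ring.
  move=> p c /andP[pc ck]; rewrite -mulrBl mulrC ler_pM2l //.
  exact: min_sum_bound_ge_large.
- move=> k1 /[dup] k1_range /andP[_ k1_le_k] lo hi.
  have k1_le_d := leq_trans k1_le_k k_le_d.
  apply: (@is_Fstar_worst_case _ _ _ _ k1 (k - k1) true) => //; try lia.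
    by rewrite /= natrM !natrB //; ring.
  move=> p c /andP[pc ck]; rewrite {1}alphaE.
  have := min_sum_bound_ge_mid (r := alpha / beta) pc ck k1_range lo hi.
  rewrite -(ler_pM2l beta_gt0); lra.
- move=> r_lt; apply: (@is_Fstar_worst_case _ _ _ _ k 0 true) => //; try lia.
    by rewrite /= mul0n mul0r addr0.
  move=> p c /andP[pc ck]; rewrite {1}alphaE.
  have r_le : alpha / beta <= d%:R - k%:R by lra.
  have := min_sum_bound_ge_small pc ck r_le.
  rewrite -(ler_pM2l beta_gt0); lra.
Qed.
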